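(* Let $(E,\varepsilon)$ be a pointed set, $(\Omega,D)$ a recombination chromology and $b\in\Omega$ an element such that $(\Omega,D,FE_b^{\varepsilon})$ is a recombination scheme. Then for every sequence alignment $(\iota,T,\sigma)$ over $\mathbf{2}E_b^{\varepsilon}$, the functor $D_ET:\mathbf{Seg}(\Omega)\to\mathbf{Icm}$ is a $\mathcal{W}^{\mathrm{mon}}$-pedigrad for $(\Omega,D)$.
   Context: Segments and $\mathbf{Seg}(\Omega)$: for $n\ge1$, $[n]=\{1,\dots,n\}$, $[0]=\emptyset$. For a pre-ordered set $(\Omega,\preceq)$, a segment is $(t,c)$ with $t:[n_1]\to[n_0]$ an order-preserving surjection and $c:[n_0]\to\Omega$; a morphism $(t,c)\to(t',c')$ is $(f_1,f_0)$ with $f_1:[n_1]\to[n_1']$ order-preserving injective, $f_0:[n_0]\to[n_0']$ order-preserving, $t'f_1=f_0t$, $c'(f_0(i))\preceq c(i)$. $\mathbf{Seg}(\Omega\,|\,n)$: segments of domain $[n]$ and morphisms with $f_1=\mathrm{id}$. A recombination chromology $(\Omega,D)$: for each $n\ge0$ a finite set $D[n]$ of wide spans (finite families $\rho_i:\tau\to\theta(i)$, $i\in[k]$) in $\mathbf{Seg}(\Omega\,|\,n)$, called cones of $D$. Ic-monoids: $\mathbf{Icm}$ is the category of idempotent commutative monoids; $F:\mathbf{Set}\to\mathbf{Icm}$ is the free functor ($F(S)$ = finite subsets of $S$ under union), left adjoint to the forgetful functor; $F$ is applied to $\mathbf{Set}$-valued functors objectwise. Environment functors: $\mathsf{Tr}_b(t,c)=\{i\in[n_1]: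 b\preceq c(t(i))\}$. $E_b^{\varepsilon}:\mathbf{Seg}(\Omega)\to\mathbf{Set}$ sends $(t,c)$ to the set of functions $u:\mathsf{Tr}_b(t,c)\to E$ and a morphism $(f_1,f_0):(t,c)\to(t',c')$ to the map $u\mapsto u'$ where $u'(j)=u(i)$ if $j=f_1(i)$ with $i\in\mathsf{Tr}_b(t,c)$, and $u'(j)=\varepsilon$ otherwise. $\mathbf{2}E_b^{\varepsilon}=E_b^{\varepsilon}\times E_b^{\varepsilon}$ (objectwise product). Recombination congruences and monoids: for $X:\mathbf{Seg}(\Omega)\to\mathbf{Icm}$ and a cone $\rho$ of $D$ with apex $\upsilon$, $X[\rho]:X(\upsilon)\to\prod_iX(\theta(i))$ has components $X(\rho_i)$ and $\mathsf{prj}_1,\mathsf{prj}_2:G(X,\rho)\rightrightarrows X(\upsilon)$ is its kernel pair. $DX$ is the functor with $q_X:X(\tau)\to DX(\tau)$ the universal $\mathbf{Icm}$-morphism with $q_X\circ X(f)\circ\mathsf{prj}_1=q_X\circ X(f)\circ\mathsf{prj}_2$ for all cones $\rho$ of $D$ (apex $\upsilon$) and all $f:\upsilon\to\tau$, with $DX(g)$ induced by $X(g)$. An object $\sigma$ is irreducible for $(\Omega,D,X)$ if for all $f:\upsilon\to\sigma$ and all cones $\rho$ of $D$ with apex $\upsilon$, $X(f)\circ\mathsf{prj}_1=X(f)\circ\mathsf{prj}_2$. $(\Omega,D,X)$ is a recombination scheme if every codomain $\theta(i)$ of a leg of a cone of $D$ is irreducible for $(\Omega,D,X)$. Sequence alignment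 over $\mathbf{2}E_b^{\varepsilon}$: a triple $(\iota,T,\sigma)$ with $\iota:B\hookrightarrow\mathbf{Seg}(\Omega)$ the inclusion of a subcategory, $T:B\to\mathbf{Set}$ a functor and $\sigma:T\Rightarrow\mathbf{2}E_b^{\varepsilon}\circ\iota$ a natural monomorphism. $\mathsf{Lan}_\iota T$ is the left Kan extension of $T$ along $\iota$ and $\sigma^*:\mathsf{Lan}_\iota T\Rightarrow\mathbf{2}E_b^{\varepsilon}$ is the transpose of $\sigma$ under the adjunction $\mathsf{Lan}_\iota\dashv(-\circ\iota)$. $\mathsf{fml}:F\mathbf{2}E_b^{\varepsilon}\Rightarrow FE_b^{\varepsilon}$ has component at $\tau$ the unique $\mathbf{Icm}$-morphism sending each singleton $\{(u,v)\}$ to $\{u,v\}$. Set $\mathsf{rec}=q_{FE_b^{\varepsilon}}\circ\mathsf{fml}\circ F\sigma^*:F\mathsf{Lan}_\iota T\Rightarrow DFE_b^{\varepsilon}$, let $y_1,y_2$ be the pullback of $\mathsf{rec}$ along itself in $[\mathbf{Seg}(\Omega),\mathbf{Icm}]$, and let $r:F\mathsf{Lan}_\iota T\Rightarrow D_ET$ be the coequalizer of $(y_1,y_2)$ (computed objectwise). $\mathcal{W}^{\mathrm{mon}}$-pedigrad for $(\Omega,D)$: a functor $P:\mathbf{Seg}(\Omega)\to\mathbf{Icm}$ such that for every cone of $D$ with legs $\rho_i:\tau\to\theta(i)$, $i\in[k]$, the induced map $P(\tau)\to\prod_{i\in[k]}P(\theta(i))$ is a monomorphism in $\mathbf{Icm}$.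 *)

From Stdlib Require List.
From Stdlib Require Import ClassicalDescription ClassicalEpsilon.
From mathcomp Require Import all_boot.
Set Implicit Arguments. Unset Strict Implicit. Unset Printing Implicit Defensive.

Record preord := PreOrd {
  pcar :> Type;
  ple : pcar -> pcar -> Prop;
  ple_refl : forall x, ple x x;
  ple_trans : forall x y z, ple x y -> ple y z -> ple x z }.

Record icmS := IcmS { icar :> Type; iop : icar -> icar -> icar; iunit : icar }.
Arguments iop {i}. Arguments iunit {i}.

Definition is_icm (M : icmS) : Prop :=
  (forall x y z : M, iop x (iop y z) = iop (iop x y) z) /\
  (forall x y : M, iop x y = iop y x) /\
  (forall x : M, iop x x = x) /\
  (forall x : M, iop iunit x = x).

Definition is_hom (M N : icmS) (h : M -> N) : Prop :=
  (forall x y, h (iop x y) = iop (h x) (h y)) /\ h iunit = iunit.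

Definition icm_mono (M N : icmS) (m : M -> N) : Prop :=
  forall Z : icmS, is_icm Z -> forall g h : Z -> M, is_hom g -> is_hom h ->
    (forall z, m (g z) = m (h z)) -> forall z, g z = h z.

Definition prodIcm (k : nat) (M : 'I_k -> icmS) : icmS :=
  @IcmS (forall i, M i) (fun x y i => iop (x i) (y i)) (fun i => iunit).

(* free ic-monoid: finite subsets under union *)
Definition finpred S (A : S -> Prop) : Prop :=
  exists l : list S, forall x, A x <-> List.In x l.
Definition Fset S := {A : S -> Prop | finpred A}.

Lemma finpred_union S (A B : S -> Prop) :
  finpred A -> finpred B -> finpred (fun x => A x \/ B x).
Proof.
move=> [l1 H1] [l2 H2]; exists (l1 ++ l2) => x.
by rewrite List.in_app_iff H1 H2.
Qed.

Lemma finpred_empty S : finpred (fun _ : S => False).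
Proof. by exists nil. Qed.

Lemma finpred_image S S' (f : S -> S') (A : S -> Prop) :
  finpred A -> finpred (fun y => exists x, A x /\ f x = y).
Proof.
move=> [l H]; exists (List.map f l) => y; rewrite List.in_map_iff; split.
  by move=> [x [/H Hx <-]]; exists x.
by move=> [x [<- /H Hx]]; exists x.
Qed.

Lemma finpred_fml S (A : S * S -> Prop) :
  finpred A -> finpred (fun w => exists p, A p /\ (w = p.1 \/ w = p.2)).
Proof.
move=> [l H]; exists (List.flat_map (fun p => p.1 :: p.2 :: nil) l) => w.
rewrite List.in_flat_map; split.
  move=> [p [/H Hp Hw]]; exists p; split => //=; case: Hw => ->; auto.
move=> [p [/H Hp /= Hw]]; exists p; split => //.
by case: Hw => [->|[->|[]]]; auto.
Qed.

Definition Funion S (A B : Fset S) : Fset S :=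
  exist _ _ (finpred_union (proj2_sig A) (proj2_sig B)).
Definition Fempty S : Fset S := exist _ _ (@finpred_empty S).
Definition FIcm (S : Type) : icmS := @IcmS (Fset S) (@Funion S) (@Fempty S).
Definition Fmap S S' (f : S -> S') (A : Fset S) : Fset S' :=
  exist _ _ (finpred_image f (proj2_sig A)).
(* fml : F(E x E) -> F(E), {(u,v)} |-> {u,v} *)
Definition Fml S (A : Fset (S * S)) : Fset S :=
  exist _ _ (finpred_fml (proj2_sig A)).

Definition is_equiv X (Q : X -> X -> Prop) : Prop :=
  (forall x, Q x x) /\ (forall x y, Q x y -> Q y x) /\
  (forall x y z, Q x y -> Q y z -> Q x z).

Definition eqv_clos X (R : X -> X -> Prop) (x y : X) : Prop :=
  forall Q, is_equiv Q -> (forall a b, R a b -> Q a b) -> Q x y.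

Definition cong_clos (M : icmS) (R : M -> M -> Prop) (x y : M) : Prop :=
  forall Q : M -> M -> Prop, is_equiv Q -> (forall a b, R a b -> Q a b) ->
    (forall a a' c, Q a a' -> Q (iop a c) (iop a' c)) ->
    (forall a a' c, Q a a' -> Q (iop c a) (iop c a')) -> Q x y.

Definition quot X (R : X -> X -> Prop) := {A : X -> Prop | exists x, A = R x}.
Definition qcl X (R : X -> X -> Prop) (x : X) : quot R :=
  exist _ (R x) (ex_intro (fun y => R x = R y) x erefl).
Definition qrep X (R : X -> X -> Prop) (q : quot R) : X :=
  proj1_sig (constructive_indefinite_description _ (proj2_sig q)).
Definition quotIcm (M : icmS) (R : M -> M -> Prop) : icmS :=
  @IcmS (quot R) (fun a b => qcl R (iop (qrep a) (qrep b))) (qcl R iunit).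

Section Seg.
Variable O : preord.

Record segObj := SegObj { sn1 : nat; sn0 : nat; st : 'I_sn1 -> 'I_sn0; sc : 'I_sn0 -> O }.
Arguments st : clear implicits. Arguments sc : clear implicits.

Definition is_seg (s : segObj) : Prop :=
  (forall i j : 'I_(sn1 s), i <= j -> st s i <= st s j) /\
  (forall j, exists i, st s i = j).

Record segMor (a c : segObj) :=
  SegMor { mf1 : 'I_(sn1 a) -> 'I_(sn1 c); mf0 : 'I_(sn0 a) -> 'I_(sn0 c) }.

Definition is_segMor a c (f : segMor a c) : Prop :=
  (forall i j : 'I_(sn1 a), i <= j -> mf1 f i <= mf1 f j) /\ injective (mf1 f) /\
  (forall i j : 'I_(sn0 a), i <= j -> mf0 f i <= mf0 f j) /\
  (forall i, st c (mf1 f i) = mf0 f (st a i)) /\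
  (forall i, ple (sc c (mf0 f i)) (sc a i)).

Definition Hom a c := {f : segMor a c | is_segMor f}.

Lemma is_segMor_comp a c d (g : segMor c d) (f : segMor a c) :
  is_segMor g -> is_segMor f ->
  is_segMor (SegMor (mf1 g \o mf1 f) (mf0 g \o mf0 f)).
Proof.
move=> [g1 [g2 [g3 [g4 g5]]]] [f1 [f2 [f3 [f4 f5]]]]; split => /=.
  by move=> i j /f1 /g1.
split; first exact: inj_comp.
split; first by move=> i j /f3 /g3.
split; first by move=> i; rewrite g4 f4.
move=> i; exact: ple_trans (g5 _) (f5 _).
Qed.

Lemma is_segMor_id a : is_segMor (SegMor (@id 'I_(sn1 a)) (@id 'I_(sn0 a))).
Proof. split=> //; split=> //; split=> //; split=> // i; exact: ple_refl. Qed.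

Definition homComp a c d (g : Hom c d) (f : Hom a c) : Hom a d :=
  exist _ _ (is_segMor_comp (proj2_sig g) (proj2_sig f)).
Definition homId a : Hom a a := exist _ _ (@is_segMor_id a).

(* a wide span (family of legs with common apex) *)
Record cone := Cone { capex : segObj; ck : nat; ccod : 'I_ck -> segObj;
                      cleg : forall i, Hom capex (ccod i) }.
Arguments ccod : clear implicits. Arguments cleg : clear implicits.

(* a wide span in Seg(Omega | n): objects of domain [n], legs with f1 = id *)
Definition is_cone_n (n : nat) (r : cone) : Prop :=
  is_seg (capex r) /\ sn1 (capex r) = n /\
  forall i, is_seg (ccod r i) /\ sn1 (ccod r i) = n /\
            forall j, val (mf1 (proj1_sig (cleg r i)) j) = val j.

(* recombination chromology: finite sets D[n] of cones *)
Record chromology := Chromology {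
  Dcones : nat -> list cone;
  Dwf : forall n r, List.In r (Dcones n) -> is_cone_n n r }.

Definition coneOf (D : chromology) (r : cone) : Prop := exists n, List.In r (Dcones D n).

Section Recomb.
Variable D : chromology.
Variable X : segObj -> icmS.
Variable Xmap : forall a c, Hom a c -> X a -> X c.

(* generating pairs X(f)∘prj1, X(f)∘prj2 on G(X,rho) *)
Definition Dgen (tau : segObj) (x y : X tau) : Prop :=
  exists r, coneOf D r /\ exists f : Hom (capex r) tau,
    exists a a' : X (capex r),
      (forall i, Xmap (cleg r i) a = Xmap (cleg r i) a') /\
      x = Xmap f a /\ y = Xmap f a'.

Definition DX (tau : segObj) : icmS := quotIcm (cong_clos (@Dgen tau)).
Definition qX (tau : segObj) (x : X tau) : DX tau := qcl _ x.

Definition irreducible (s : segObj) : Prop :=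
  forall r, coneOf D r -> forall f : Hom (capex r) s, forall a a' : X (capex r),
    (forall i, Xmap (cleg r i) a = Xmap (cleg r i) a') -> Xmap f a = Xmap f a'.

Definition rec_scheme : Prop :=
  forall r, coneOf D r -> forall i, irreducible (ccod r i).

Definition pedigrad : Prop :=
  forall r, coneOf D r ->
    @icm_mono (X (capex r)) (prodIcm (fun i => X (ccod r i)))
              (fun x i => Xmap (cleg r i) x).
End Recomb.

Section Env.
Variables (E : Type) (eps : E) (b : O).

Definition Tr (s : segObj) := {i : 'I_(sn1 s) | ple b (sc s (st s i))}.
Definition Eb (s : segObj) := Tr s -> E.

Definition Ebmap a c (f : Hom a c) (u : Eb a) : Eb c := fun j =>
  match excluded_middle_informative
          (exists i : Tr a, mf1 (proj1_sig f) (proj1_sig i) = proj1_sig j) with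
  | left H => u (proj1_sig (constructive_indefinite_description _ H))
  | right _ => eps
  end.

Definition E2map a c (f : Hom a c) (p : Eb a * Eb a) : Eb c * Eb c :=
  (Ebmap f p.1, Ebmap f p.2).

Definition FE (s : segObj) : icmS := FIcm (Eb s).
Definition FEmap a c (f : Hom a c) : FE a -> FE c := Fmap (Ebmap f).

(* B a subcategory (predicates on objects / morphisms), T : B -> Set given by
   its values on B (values outside B are irrelevant), sigma : T => 2E∘iota. *)
Record alignment := Alignment {
  Bobj : segObj -> Prop;
  Bmor : forall a c, Hom a c -> Prop;
  Tob : segObj -> Type;
  Tmap : forall a c, Hom a c -> Tob a -> Tob c;
  sigm : forall s, Tob s -> Eb s * Eb s }.
Arguments Bmor : clear implicits. Arguments Tmap : clear implicits.
Arguments sigm : clear implicits.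

Definition is_alignment (A : alignment) : Prop :=
  (forall s, Bobj A s -> is_seg s) /\
  (forall a c (f : Hom a c), Bmor A _ _ f -> Bobj A a /\ Bobj A c) /\
  (forall s, Bobj A s -> Bmor A _ _ (homId s)) /\
  (forall a c d (f : Hom a c) (g : Hom c d), Bmor A _ _ f -> Bmor A _ _ g ->
      Bmor A _ _ (homComp g f)) /\
  (forall s, Bobj A s -> forall x, Tmap A s s (homId s) x = x) /\
  (forall a c d (f : Hom a c) (g : Hom c d), Bmor A _ _ f -> Bmor A _ _ g ->
      forall x, Tmap A a d (homComp g f) x = Tmap A c d g (Tmap A a c f x)) /\
  (forall s, Bobj A s -> injective (sigm A s)) /\
  (forall a c (f : Hom a c), Bmor A _ _ f ->
      forall x, sigm A c (Tmap A a c f x) = E2map f (sigm A a x)).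

Section Align.
Variable D : chromology.
Variable A : alignment.

(* Lan_iota T (tau): colimit of T over the comma category (iota ↓ tau) *)
Record lanEl (tau : segObj) := LanEl {
  lb : segObj; lbB : Bobj A lb; lf : Hom lb tau; lx : Tob A lb }.

Definition lanGen (tau : segObj) (p q : lanEl tau) : Prop :=
  exists g : Hom (lb p) (lb q), Bmor A _ _ g /\
    lf p = homComp (lf q) g /\ lx q = Tmap A _ _ g (lx p).

Definition LanT (tau : segObj) := quot (eqv_clos (@lanGen tau)).

Definition LanMap tau tau' (h : Hom tau tau') (q : LanT tau) : LanT tau' :=
  let p := qrep q in qcl _ (LanEl (lbB p) (homComp h (lf p)) (lx p)).

(* transpose sigma^* : Lan T => 2E *)
Definition sigStar (tau : segObj) (q : LanT tau) : Eb tau * Eb tau :=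
  let p := qrep q in E2map (lf p) (sigm A _ (lx p)).

Definition FLanT (tau : segObj) : icmS := FIcm (LanT tau).

Definition recm (tau : segObj) (x : FLanT tau) : DX D FEmap tau :=
  qX D FEmap (Fml (Fmap (@sigStar tau) x) : FE tau).

(* D_E T : coequalizer of the kernel pair of rec, objectwise *)
Definition kerRel (tau : segObj) (x y : FLanT tau) : Prop := recm x = recm y.
Definition DET (tau : segObj) : icmS := quotIcm (cong_clos (@kerRel tau)).
Definition DETmap tau tau' (h : Hom tau tau') (z : DET tau) : DET tau' :=
  qcl _ (Fmap (LanMap h) (qrep z) : FLanT tau').
End Align.
End Env.
End Seg.

From mathcomp Require Import all_boot.
From Stdlib Require Import FunctionalExtensionality PropExtensionality.
From Stdlib Require Import ProofIrrelevance ClassicalEpsilon.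
Set Implicit Arguments. Unset Strict Implicit. Unset Printing Implicit Defensive.

(** D_E T(τ) is the quotient of F(Lan T)(τ) by the kernel of rec, so an element
    of it is determined by its image under rec in D(FE)(τ).  Naturality of σ^*
    and of fml makes rec natural; hence if two elements agree after every leg of
    a cone ρ of D, their rec-images agree in D(FE)(θ(i)).  Each θ(i) is
    irreducible, so there D(FE)(θ(i)) = FE(θ(i)) and the underlying elements of
    FE agree after every leg.  They then form a generating pair of the
    recombination congruence at the apex (with f = id), so their rec-images
    coincide: the comparison map of D_E T at ρ is injective, hence mono. *)

Lemma sig_val_inj X (P : X -> Prop) (x y : sig P) : proj1_sig x = proj1_sig y -> x = y.
Proof. by case: x y => x Px [y Py] /= xy; apply: subset_eq_compat. Qed.

Lemma pred_sig_ext X (Q : (X -> Prop) -> Prop) (A B : {P : X -> Prop | Q P}) :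
  (forall x, proj1_sig A x <-> proj1_sig B x) -> A = B.
Proof.
move=> AB; apply: sig_val_inj; apply: functional_extensionality => x.
exact: propositional_extensionality.
Qed.

Section Closures.
Variable X : Type.

Lemma kernel_equiv Y (phi : X -> Y) : is_equiv (fun x y => phi x = phi y).
Proof. by split=> [//|]; split=> [x y ->|x y z ->]. Qed.

Lemma eqv_clos_equiv (R : X -> X -> Prop) : is_equiv (eqv_clos R).
Proof.
split=> [x Q [refl _] _|]; first exact: refl.
split=> [x y xy|x y z xy yz] Q HQ HR; case: (HQ) => _ [sym trans].
  exact/sym/(xy Q HQ HR).
exact: trans (xy Q HQ HR) (yz Q HQ HR).
Qed.

Lemma eqv_clos_kernel Y (R : X -> X -> Prop) (phi : X -> Y) :
  (forall x y, R x y -> phi x = phi y) ->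
  forall x y, eqv_clos R x y -> phi x = phi y.
Proof. by move=> HR x y xy; apply: xy _ (kernel_equiv phi) HR. Qed.

Lemma qcl_qrep (R : X -> X -> Prop) (q : quot R) : qcl R (qrep q) = q.
Proof.
apply: pred_sig_ext => x; rewrite /qrep /=.
by case: (constructive_indefinite_description _ _) => y /= <-.
Qed.

Lemma qcl_eqP (R : X -> X -> Prop) {x y : X} :
  is_equiv R -> qcl R x = qcl R y <-> R x y.
Proof.
move=> [refl [sym trans]]; split=> [/(f_equal (@proj1_sig _ _)) /= -> //|xy].
by apply: pred_sig_ext => z /=; split=> [/(trans _ _ _ (sym _ _ xy))|/(trans _ _ _ xy)].
Qed.

End Closures.

Section Congruences.
Variables (M : icmS) (R : M -> M -> Prop).

Lemma cong_clos_equiv : is_equiv (cong_clos R).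
Proof.
split=> [x Q [refl _] _ _ _|]; first exact: refl.
split=> [x y xy|x y z xy yz] Q HQ HR Hl Hr; case: (HQ) => _ [sym trans].
  exact/sym/(xy Q HQ HR Hl Hr).
exact: trans (xy Q HQ HR Hl Hr) (yz Q HQ HR Hl Hr).
Qed.

Lemma sub_cong_clos x y : R x y -> cong_clos R x y.
Proof. by move=> xy Q _ HR _ _; apply: HR. Qed.

Lemma cong_clos_kernel Y (phi : M -> Y) :
  (forall x y, R x y -> phi x = phi y) ->
  (forall x x' c, phi x = phi x' -> phi (iop x c) = phi (iop x' c)) ->
  (forall x x' c, phi x = phi x' -> phi (iop c x) = phi (iop c x')) ->
  forall x y, cong_clos R x y -> phi x = phi y.
Proof. by move=> HR Hl Hr x y xy; apply: xy _ (kernel_equiv phi) HR Hl Hr. Qed.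

Lemma qcl_iopl x x' c : qcl (cong_clos R) x = qcl (cong_clos R) x' ->
  qcl (cong_clos R) (iop x c) = qcl (cong_clos R) (iop x' c).
Proof.
rewrite !qcl_eqP; try exact: cong_clos_equiv.
by move=> xx' Q HQ HR Hl Hr; apply: Hl _ _ _ (xx' Q HQ HR Hl Hr).
Qed.

Lemma qcl_iopr x x' c : qcl (cong_clos R) x = qcl (cong_clos R) x' ->
  qcl (cong_clos R) (iop c x) = qcl (cong_clos R) (iop c x').
Proof.
rewrite !qcl_eqP; try exact: cong_clos_equiv.
by move=> xx' Q HQ HR Hl Hr; apply: Hr _ _ _ (xx' Q HQ HR Hl Hr).
Qed.

End Congruences.

Lemma inj_icm_mono (M N : icmS) (m : M -> N) : injective m -> icm_mono m.
Proof. by move=> m_inj Z _ g h _ _ gh z; apply/m_inj/gh. Qed.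

Section FreeIcm.
Variables S T U : Type.

Lemma Fmap_id (f : S -> S) (A : Fset S) : f =1 id -> Fmap f A = A.
Proof.
move=> fid; apply: pred_sig_ext => x /=.
by split=> [[y [Ay <-]]|Ax]; [rewrite fid|exists x; rewrite fid].
Qed.

Lemma Fmap_comp (f : S -> T) (g : T -> U) (A : Fset S) :
  Fmap g (Fmap f A) = Fmap (g \o f) A.
Proof.
apply: pred_sig_ext => z /=.
split=> [[_ [[x [Ax <-]] <-]]|[x [Ax <-]]]; first by exists x.
by exists (f x); split=> //; exists x.
Qed.

Lemma Fml_Fmap_union (f : S -> T * T) (A B : Fset S) :
  Fml (Fmap f (Funion A B)) = Funion (Fml (Fmap f A)) (Fml (Fmap f B)).
Proof.
apply: pred_sig_ext => w /=; split.
  by move=> [_ [[x [[Ax|Bx] <-]] w_x]]; [left|right]; exists (f x); split=> //; exists x.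
by move=> [] [_ [[x [ABx <-]] w_x]]; exists (f x); split=> //; exists x; split=> //;
  [left|right].
Qed.

Lemma Fml_Fmap_pairmap (f : S -> T * T) (g : T -> U) (A : Fset S) :
  Fml (Fmap (fun x => (g (f x).1, g (f x).2)) A) = Fmap g (Fml (Fmap f A)).
Proof.
apply: pred_sig_ext => w /=; split.
  move=> [p [[x [Ax <-]] /= [->|->]]]; [exists (f x).1|exists (f x).2];
    by split=> //; exists (f x); split; [exists x|]; auto.
move=> [v [[p [[x [Ax <-]] v_x]] <-]]; exists (g (f x).1, g (f x).2).
by split; [exists x|case: v_x => ->; auto].
Qed.

End FreeIcm.

Section EnvironmentFunctor.
Variables (O : preord) (E : Type) (eps : E) (b : O).

Lemma mf1_inj (a c : segObj O) (f : Hom a c) : injective (mf1 (proj1_sig f)).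
Proof. by case: (proj2_sig f) => _ []. Qed.

Lemma Tr_mf1 (a c : segObj O) (f : Hom a c) i :
  ple b (sc (st (mf1 (proj1_sig f) i))) -> ple b (sc (st i)).
Proof.
case: f => f [_ [_ [_ [st_f sc_f]]]] /=; rewrite st_f => b_f.
exact: ple_trans b_f (sc_f _).
Qed.

Lemma Ebmap_hit (a c : segObj O) (f : Hom a c) (u : Eb E b a)
    (i : Tr b a) (j : Tr b c) :
  mf1 (proj1_sig f) (proj1_sig i) = proj1_sig j -> Ebmap eps f u j = u i.
Proof.
move=> fij; rewrite /Ebmap.
case: excluded_middle_informative => [hit|]; last by case; exists i.
case: constructive_indefinite_description => i' fi'j; congr u.
by apply: sig_val_inj => /=; apply: (mf1_inj (f := f)); rewrite fij fi'j.
Qed.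

Lemma Ebmap_miss (a c : segObj O) (f : Hom a c) (u : Eb E b a) (j : Tr b c) :
  (forall i : Tr b a, mf1 (proj1_sig f) (proj1_sig i) <> proj1_sig j) ->
  Ebmap eps f u j = eps.
Proof.
move=> miss; rewrite /Ebmap; case: excluded_middle_informative => // hit.
by exfalso; case: hit => i /miss.
Qed.

Lemma Ebmap_id (s : segObj O) (u : Eb E b s) : Ebmap eps (homId s) u = u.
Proof. by apply: functional_extensionality => j; apply: Ebmap_hit. Qed.

Lemma Ebmap_comp (a c d : segObj O) (f : Hom a c) (g : Hom c d) (u : Eb E b a) :
  Ebmap eps (homComp g f) u = Ebmap eps g (Ebmap eps f u).
Proof.
apply: functional_extensionality => j.
have [[i gfij]|miss] :=
  classic (exists i : Tr b a, mf1 (proj1_sig (homComp g f)) (proj1_sig i) = proj1_sig j).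
  have fi_in : ple b (sc (st (mf1 (proj1_sig f) (proj1_sig i)))).
    by apply: (Tr_mf1 (f := g)); rewrite [mf1 _ _]gfij; apply: (proj2_sig j).
  pose k : Tr b c := exist (fun k => ple b (sc (st k))) _ fi_in.
  rewrite (Ebmap_hit _ gfij) (Ebmap_hit (f := g) (i := k) _ gfij).
  exact/esym/Ebmap_hit.
rewrite Ebmap_miss => [|i gfij]; last by apply: miss; exists i.
have [[k gkj]|miss'] :=
  classic (exists k : Tr b c, mf1 (proj1_sig g) (proj1_sig k) = proj1_sig j).
  rewrite (Ebmap_hit _ gkj) Ebmap_miss // => i fik.
  by apply: miss; exists i; rewrite /= fik.
by rewrite Ebmap_miss // => k gkj; apply: miss'; exists k.
Qed.

Lemma E2map_comp (a c d : segObj O) (f : Hom a c) (g : Hom c d)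
    (p : Eb E b a * Eb E b a) :
  E2map eps (homComp g f) p = E2map eps g (E2map eps f p).
Proof. by rewrite /E2map /= !Ebmap_comp. Qed.

Lemma FEmap_id (s : segObj O) (x : FE E b s) : FEmap eps (homId s) x = x.
Proof. by apply: Fmap_id => u; apply: Ebmap_id. Qed.

End EnvironmentFunctor.

Section RecombinationQuotient.
Variables (O : preord) (D : chromology O) (X : segObj O -> icmS).
Variable Xmap : forall a c, Hom a c -> X a -> X c.

Lemma irreducible_qX_inj s : irreducible D Xmap s -> injective (@qX O D X Xmap s).
Proof.
move=> s_irr x y /(qcl_eqP (cong_clos_equiv _)).
apply: (cong_clos_kernel (phi := id)) => [x' y' [r [Dr [f [a [a' [legs [-> ->]]]]]]]||].
- exact: s_irr.
- by move=> x' x'' c ->.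
- by move=> x' x'' c ->.
Qed.

Lemma qX_cone_apex r (a a' : X (capex r)) :
  (forall s x, Xmap (homId s) x = x) -> coneOf D r ->
  (forall i, Xmap (cleg (c := r) i) a = Xmap (cleg (c := r) i) a') ->
  qX D Xmap a = qX D Xmap a'.
Proof.
move=> Xmap_id Dr legs; apply/(qcl_eqP (cong_clos_equiv _)); apply: sub_cong_clos.
by exists r; split=> //; exists (homId _), a, a'; rewrite !Xmap_id.
Qed.

End RecombinationQuotient.

Section Alignment.
Variables (O : preord) (E : Type) (eps : E) (b : O) (D : chromology O).
Variable A : alignment E b.
Hypothesis sigm_nat : forall a c (f : Hom a c), Bmor A f ->
  forall x : Tob A a, sigm (Tmap f x) = E2map eps f (sigm x).

(* The value of σ^* on the class of [p]. *)
Definition lanSig tau (p : lanEl A tau) : Eb E b tau * Eb E b tau :=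
  E2map eps (lf p) (sigm (lx p)).

Lemma lanSig_lanGen tau (p q : lanEl A tau) : lanGen p q -> lanSig p = lanSig q.
Proof. by move=> [g [Ag [lf_p lx_q]]]; rewrite /lanSig lf_p lx_q sigm_nat // E2map_comp. Qed.

Lemma sigStar_LanMap tau tau' (h : Hom tau tau') (q : LanT A tau) :
  sigStar eps (LanMap h q) = E2map eps h (sigStar eps q).
Proof.
rewrite /sigStar /LanMap /=; set e := LanEl _ _ _.
set R := eqv_clos (@lanGen _ _ _ A tau').
have e_rep : R e (qrep (qcl R e)) by apply/(qcl_eqP (eqv_clos_equiv _)); rewrite qcl_qrep.
have := eqv_clos_kernel (@lanSig_lanGen _) e_rep; rewrite /lanSig => <-.
exact: E2map_comp.
Qed.

Definition fmlSig tau (w : FLanT A tau) : FE E b tau :=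
  Fml (Fmap (@sigStar _ _ eps _ A tau) w).

Lemma recmE tau (w : FLanT A tau) : recm eps D w = qX D (@FEmap _ _ eps b) (fmlSig w).
Proof. by []. Qed.

Lemma fmlSig_union tau (x y : FLanT A tau) :
  fmlSig (Funion x y) = Funion (fmlSig x) (fmlSig y).
Proof. exact: Fml_Fmap_union. Qed.

Lemma fmlSig_LanMap tau tau' (h : Hom tau tau') (w : FLanT A tau) :
  fmlSig (Fmap (LanMap h) w) = FEmap eps h (fmlSig w).
Proof.
rewrite /fmlSig /FEmap Fmap_comp -Fml_Fmap_pairmap; congr (Fml (Fmap _ w)).
by apply: functional_extensionality => q /=; rewrite sigStar_LanMap.
Qed.

Lemma recm_cong_clos tau (x y : FLanT A tau) :
  cong_clos (@kerRel _ _ eps _ D A tau) x y -> recm eps D x = recm eps D y.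
Proof.
by apply: cong_clos_kernel => // u u' c; rewrite !recmE !fmlSig_union;
  [apply: qcl_iopl|apply: qcl_iopr].
Qed.

Lemma DETmap_recm tau tau' (h : Hom tau tau') (z z' : DET eps D A tau) :
  DETmap h z = DETmap h z' ->
  qX D (@FEmap _ _ eps b) (FEmap eps h (fmlSig (qrep z))) =
  qX D (@FEmap _ _ eps b) (FEmap eps h (fmlSig (qrep z'))).
Proof.
by move/(qcl_eqP (cong_clos_equiv _))/recm_cong_clos; rewrite !recmE !fmlSig_LanMap.
Qed.

End Alignment.

Theorem mainTheorem10 (O : preord) (E : Type) (eps : E) (D : chromology O) (b : O) :
  rec_scheme D (@FEmap O E eps b) ->
  forall A : @alignment O E b, @is_alignment O E eps b A ->
    pedigrad D (@DETmap O E eps b D A).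
Proof.
move=> scheme A [_ [_ [_ [_ [_ [_ [_ sigm_nat]]]]]]] r Dr.
apply: inj_icm_mono => z z' /= legs.
rewrite -(qcl_qrep z) -(qcl_qrep z').
apply/(qcl_eqP (cong_clos_equiv (@kerRel _ _ eps _ D A _))); apply: sub_cong_clos.
rewrite /kerRel !recmE; apply: (qX_cone_apex (@FEmap_id _ _ eps b) Dr) => i.
apply: (irreducible_qX_inj (scheme r Dr i)).
exact: (DETmap_recm sigm_nat (congr1 (fun F => F i) legs)).
Qed.
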